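(* For every environment $E$, every total preorder on $\Pi^E$ induced by a Regularised RL specification is also induced by some Function-from-Trajectory-Lotteries-to-Reals specification; i.e. $\mathrm{Ord}_{\mathrm{RRL}}(E)\subseteq\mathrm{Ord}_{\mathrm{FTLR}}(E)$. In particular, for every RRL specification and all $\pi_1,\pi_2\in\Pi^E$, $L_{\pi_1}=L_{\pi_2}$ implies $J_{\mathrm{RRL}}(\pi_1)=J_{\mathrm{RRL}}(\pi_2)$.
   Context: An environment is a tuple $E=(\mathcal S,\mathcal A,\mathcal T,\mathcal I)$ where $\mathcal S,\mathcal A$ are finite nonempty sets, $\mathcal T:\mathcal S\times\mathcal A\to\Delta(\mathcal S)$ and $\mathcal I\in\Delta(\mathcal S)$. A policy is a map $\pi:\mathcal S\to\Delta(\mathcal A)$ (stationary, possibly stochastic); $\Pi^E$ denotes the set of all policies. A trajectory $\xi=(s_0,a_0,s_1,a_1,\dots)$ is generated under $\pi$ by $s_0\sim\mathcal I$, $a_t\sim\pi(s_t)$, $s_{t+1}\sim\mathcal T(s_t,a_t)$; $\mathbb E^\pi_\xi$ denotes expectation under this distribution. An objective-specification formalism $X$ assigns to each environment $E$ a set of objective specifications, each inducing a total preorder $\succeq$ on $\Pi^E$; $\mathrm{Ord}_X(E)$ is the set of total preorders so induced. A specification defining a scalar $J:\Pi^E\to\mathbb R$ induces $\pi_1\succeq\pi_2\iff J(\pi_1)\ge J(\pi_2)$. Trajectory lottery: $L_{k,\pi}$ is the distribution of $(s_0,a_0,\dots,a_{k-1},s_k)$ under $\pi$, $L_\pi=(L_{0,\pi},L_{1,\pi},\dots)$,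 $L_{\Pi^E}=\{L_\pi:\pi\in\Pi^E\}$. RRL: specification $(\mathcal R,\alpha,F,\gamma)$ with $\mathcal R:\mathcal S\times\mathcal A\times\mathcal S\to\mathbb R$, $\alpha\in\mathbb R$, $F:\Delta(\mathcal A)\to\mathbb R$, $\gamma\in[0,1)$; $J_{\mathrm{RRL}}(\pi)=\mathbb E^\pi_\xi\big[\sum_{t=0}^\infty\gamma^t\big(\mathcal R(s_t,a_t,s_{t+1})-\alpha F(\pi(s_t))\big)\big]$. FTLR: specification $(f)$ with $f:L_{\Pi^E}\to\mathbb R$; $J(\pi)=f(L_\pi)$. *)

From HB Require Import structures.
From mathcomp Require Import all_boot all_order all_algebra.
From mathcomp Require Import all_classical all_reals all_analysis.
Set Implicit Arguments. Unset Strict Implicit. Unset Printing Implicit Defensive.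
Import Order.TTheory GRing.Theory Num.Theory numFieldNormedType.Exports.
Local Open Scope ring_scope.

Section RL.
Variable R : realType.

Definition is_dist (X : finType) (p : {ffun X -> R}) : bool :=
  [forall x, 0 <= p x] && (\sum_x p x == 1).
Definition dist (X : finType) := {p : {ffun X -> R} | is_dist p}.
Definition dprob (X : finType) (p : dist X) (x : X) : R := sval p x.

(* An environment E = (S, A, T, I) with S, A finite (nonemptiness is a
   hypothesis of the main theorem). *)
Record env (S A : finType) := Env {
  trans : S -> A -> dist S;
  init  : dist S
}.

Definition policy (S A : finType) := S -> dist A.

Variables (S A : finType) (E : env S A).

Fixpoint cont_prob (pi : policy S A) (s : S) (l : seq (A * S)) : R :=
  match l with
  | [::] => 1
  | (a, s') :: l' =>
      dprob (pi s) a * dprob (trans E s a) s' * cont_prob pi s' l'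
  end.

(* Trajectory lottery L_pi.  L_pi s0 l is the probability of the prefix
   (s0, a0, s1, ..., a_{k-1}, s_k) where l = [(a0,s1);...;(a_{k-1},s_k)];
   the restriction to sequences l of size k is L_{k,pi}. *)
Definition traj_lottery (pi : policy S A) : S -> seq (A * S) -> R :=
  fun s0 l => dprob (init E) s0 * cont_prob pi s0 l.

Definition lottery_set := {Lt : S -> seq (A * S) -> R |
                             exists pi : policy S A, Lt = traj_lottery pi}.

Definition lottery_of (pi : policy S A) : lottery_set :=
  exist _ (traj_lottery pi) (ex_intro _ pi erefl).

Record rrl_spec := RRL {
  rrl_R : S -> A -> S -> R;
  rrl_alpha : R;
  rrl_F : dist A -> R;
  rrl_gamma : R
}.

Definition reg_reward (sp : rrl_spec) (pi : policy S A) (st : S) (at_ : A)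
    (st1 : S) : R :=
  rrl_R sp st at_ st1 - rrl_alpha sp * rrl_F sp (pi st).

(* E^pi[ R(s_t,a_t,s_{t+1}) - alpha F(pi(s_t)) ], computed w.r.t. the
   distribution of the prefix (s_0,a_0,...,a_t,s_{t+1}). *)
Definition step_expectation (sp : rrl_spec) (pi : policy S A) (t : nat) : R :=
  \sum_(s0 : S) \sum_(l : (t.+1).-tuple (A * S))
    traj_lottery pi s0 l *
    reg_reward sp pi (last s0 (map snd (take t l)))
                     (tnth l ord_max).1 (tnth l ord_max).2.

Definition J_RRL (sp : rrl_spec) (pi : policy S A) : R :=
  limn (series (fun t : nat => rrl_gamma sp ^+ t * step_expectation sp pi t)).

End RL.

(** The regularised return of a policy depends on the policy only through
    its trajectory lottery.  Indeed the regulariser [F (pi s)] is only ever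
    evaluated at states [s] that end a prefix of positive probability, and
    there [pi s] is recovered from the lottery as the conditional law of the
    next action: summing the lottery over the next state gives
    [L (p ++ [(a, _)]) = L p * pi (last p) a].  Prefixes of probability zero
    contribute nothing to the step expectations.  An objective that is
    invariant under equality of lotteries then factors through the set of
    lotteries, which is the FTLR specification. *)
From HB Require Import structures.
From mathcomp Require Import all_boot all_order all_algebra.
From mathcomp Require Import all_classical all_reals all_analysis.
Import Order.TTheory GRing.Theory Num.Theory.
Local Open Scope ring_scope.

Lemma dprob_sum1 (R : realType) (X : finType) (d : dist R X) :
  \sum_x dprob d x = 1.
Proof. by have /andP[_ /eqP] := svalP d. Qed.

Section TrajectoryLottery.
Variables (R : realType) (S A : finType) (E : env R S A).
Implicit Types (pi : policy R S A) (s : S) (p q : seq (A * S)).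

Lemma cont_prob_cat pi s p q :
  cont_prob E pi s (p ++ q) =
  cont_prob E pi s p * cont_prob E pi (last s (map snd p)) q.
Proof.
elim: p s => [|[a s'] p IHp] s /=; first by rewrite mul1r.
by rewrite IHp mulrA.
Qed.

Lemma traj_lottery_cat pi s p q :
  traj_lottery E pi s (p ++ q) =
  traj_lottery E pi s p * cont_prob E pi (last s (map snd p)) q.
Proof. by rewrite /traj_lottery cont_prob_cat mulrA. Qed.

Lemma traj_lottery_next_action pi s p a :
  \sum_s' traj_lottery E pi s (p ++ [:: (a, s')]) =
  traj_lottery E pi s p * dprob (pi (last s (map snd p))) a.
Proof.
under eq_bigr => s' _ do rewrite traj_lottery_cat /= mulr1.
by rewrite -mulr_sumr -mulr_sumr dprob_sum1 mulr1.
Qed.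

Lemma policy_eq_on_lottery_support pi1 pi2 s p :
  traj_lottery E pi1 = traj_lottery E pi2 ->
  traj_lottery E pi1 s p != 0 ->
  pi1 (last s (map snd p)) = pi2 (last s (map snd p)).
Proof.
move=> eqL nz_p; apply/val_inj/ffunP => a.
have := traj_lottery_next_action pi1 s p a.
rewrite eqL traj_lottery_next_action -eqL => /eqP.
by rewrite (inj_eq (mulfI nz_p)) => /eqP.
Qed.

Lemma step_expectation_lottery_eq (sp : rrl_spec R S A) pi1 pi2 t :
  traj_lottery E pi1 = traj_lottery E pi2 ->
  step_expectation E sp pi1 t = step_expectation E sp pi2 t.
Proof.
move=> eqL; apply: eq_bigr => s _; apply: eq_bigr => l _.
rewrite -eqL; have [->|nz_l] := eqVneq (traj_lottery E pi1 s l) 0.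
  by rewrite !mul0r.
have nz_prefix : traj_lottery E pi1 s (take t l) != 0.
  apply: contra nz_l => /eqP prefix0.
  by rewrite -(cat_take_drop t l) traj_lottery_cat prefix0 mul0r.
by rewrite /reg_reward (policy_eq_on_lottery_support _ _ _ _ eqL nz_prefix).
Qed.

(* No bound on the discount is needed: [J_RRL] is a function of the step
   expectations whether or not the series converges. *)
Lemma J_RRL_lottery_eq (sp : rrl_spec R S A) pi1 pi2 :
  traj_lottery E pi1 = traj_lottery E pi2 ->
  J_RRL E sp pi1 = J_RRL E sp pi2.
Proof.
move=> eqL; rewrite /J_RRL; congr (limn (series _)); apply: funext => t.
by rewrite (step_expectation_lottery_eq sp _ _ t eqL).
Qed.

Lemma factor_through_lottery (T : Type) (J : policy R S A -> T) :
  (forall pi1 pi2, traj_lottery E pi1 = traj_lottery E pi2 -> J pi1 = J pi2) ->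
  exists f : lottery_set E -> T, forall pi, f (lottery_of E pi) = J pi.
Proof.
move=> J_inv.
exists (fun L : lottery_set E =>
  J (sval (cid (P := fun pi => sval L = traj_lottery E pi) (svalP L)))) => pi.
by case: cid => pi' /= eqL; apply: J_inv.
Qed.

End TrajectoryLottery.

Theorem mainTheorem7 (R : realType) (S A : finType) (E : env R S A)
    (hS : (0 < #|S|)%N) (hA : (0 < #|A|)%N) (sp : rrl_spec R S A)
    (hg0 : 0 <= rrl_gamma sp) (hg1 : rrl_gamma sp < 1) :
  (exists f : lottery_set E -> R,
     forall pi1 pi2 : policy R S A,
       (J_RRL E sp pi1 >= J_RRL E sp pi2) <->
       (f (lottery_of E pi1) >= f (lottery_of E pi2)))
  /\
  (forall pi1 pi2 : policy R S A,
     traj_lottery E pi1 = traj_lottery E pi2 ->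
     J_RRL E sp pi1 = J_RRL E sp pi2).
Proof.
have J_inv := @J_RRL_lottery_eq R S A E sp.
split=> //.
have [f f_lottery] := @factor_through_lottery R S A E R _ J_inv.
by exists f => pi1 pi2; rewrite !f_lottery.
Qed.
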